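(* Let $k\ge2$ be an integer and for $p>1$ define \[\psi_k(x)=\sin^p(\pi x)\Big(\frac1{(k-x)^p}+\frac1{(k+x-1)^p}\Big),\qquad x\in[1/2,1].\] Then: (i) for all $p>1$, the points $x=1/2$ and $x=1$ are abscissae of extrema of $\psi_k$; (ii) if $p>\pi^2(k-1/2)^2-1$, then $\psi_k$ attains an extremum at some point $x_k^*\in(1/2,A_k)$, where $A_k\in(1/2,1)$ is the unique solution in $(1/2,1)$ of the equation $\cot(\pi x)=-\frac{1}{\pi(k-x)}$; (iii) each $x_k^*\in(1/2,A_k)$ is the abscissa of an extremum of $\psi_k$ for exactly one value $p=\widetilde p$, namely \[\widetilde p=\frac{\ln\dfrac{1-\pi\cot(\pi x_k^* )(k+x_k^*-1)}{\pi\cot(\pi x_k^* )(k+x_k^*-1)-1+\frac{2k-1}{k-x_k^*}}}{\ln(k+x_k^*-1)-\ln(k-x_k^* )},\] and this value satisfies $\widetilde p>1$. *)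

From Stdlib Require Import Reals.
Open Scope R_scope.

(* Real power x^p for x >= 0, p > 0, with the convention 0^p = 0
   (Stdlib's Rpower 0 p would give 1). *)
Definition rpow (x p : R) : R := if Rle_dec x 0 then 0 else Rpower x p.

Definition cot (x : R) : R := cos x / sin x.

Definition psi (k : nat) (p x : R) : R :=
  rpow (sin (PI * x)) p * (/ rpow (INR k - x) p + / rpow (INR k + x - 1) p).

Definition is_extremum_on (a b : R) (f : R -> R) (x : R) : Prop :=
  a <= x <= b /\
  exists d, d > 0 /\
    ((forall y, a <= y <= b -> Rabs (y - x) < d -> f y <= f x) \/
     (forall y, a <= y <= b -> Rabs (y - x) < d -> f x <= f y)).

Definition A_eq (k : nat) (x : R) : Prop :=
  cot (PI * x) = - / (PI * (INR k - x)).

Definition ptilde (k : nat) (x : R) : R :=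
  ln ((1 - PI * cot (PI * x) * (INR k + x - 1)) /
      (PI * cot (PI * x) * (INR k + x - 1) - 1 + (2 * INR k - 1) / (INR k - x)))
  / (ln (INR k + x - 1) - ln (INR k - x)).

From Stdlib Require Import Reals Lra.
From Coquelicot Require Import Coquelicot.
Open Scope R_scope.

(* On (0, 1), psi = psi_l + psi_r with psi_l = (sin (pi x) / (k - x))^p and
   psi_r = (sin (pi x) / (k + x - 1))^p, and psi' = p (psi_l alpha - psi_r beta) where
   alpha = 1/(k - x) + pi cot (pi x) and beta = 1/(k + x - 1) - pi cot (pi x).
   On [1/2, 1) beta > 0, while alpha decreases through a single root A < 3/4: this is
   A_k, and psi' < 0 on [A, 1).  On [1/2, A) psi' has the sign of
   K = p ln ((k + x - 1)/(k - x)) + ln alpha - ln beta, which vanishes at 1/2 and whose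
   derivative has the sign of (p + 1) alpha beta - pi^2.  As alpha beta decreases on
   [1/2, 3/4], K increases (only if (p + 1) alpha beta (1/2) > pi^2) and then decreases,
   so it has at most one zero in (1/2, A), where psi has its interior extremum; solving
   K = 0 for p gives p~, and K < 0 for p = 1 gives p~ > 1. *)

Lemma incr_of_derive_pos (f f' : R -> R) a b : a < b ->
  (forall c, a <= c <= b -> is_derive f c (f' c)) ->
  (forall c, a < c < b -> 0 < f' c) -> f a < f b.
Proof.
intros Hab Hd Hpos.
destruct (MVT_cor2 f f' a b Hab) as [c [E Hc]].
- intros c Hc; apply is_derive_Reals, Hd, Hc.
- specialize (Hpos c Hc); nra.
Qed.

Lemma decr_of_derive_neg (f f' : R -> R) a b : a < b ->
  (forall c, a <= c <= b -> is_derive f c (f' c)) ->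
  (forall c, a < c < b -> f' c < 0) -> f b < f a.
Proof.
intros Hab Hd Hneg.
destruct (MVT_cor2 f f' a b Hab) as [c [E Hc]].
- intros c Hc; apply is_derive_Reals, Hd, Hc.
- specialize (Hneg c Hc); nra.
Qed.

Lemma continuity_pt_of_ex_derive (f : R -> R) x : ex_derive f x -> continuity_pt f x.
Proof. intros H; apply continuity_pt_filterlim; exact (ex_derive_continuous f x H). Qed.

Lemma continuity_pt_gt_right (f : R -> R) a L B : continuity_pt f a -> L < f a -> a < B ->
  exists z, a < z < B /\ L < f z.
Proof.
intros Hc HL HB.
destruct (Hc (f a - L)) as [d [Hd Hnear]]; [lra|].
set (z := Rmin (a + d / 2) ((a + B) / 2)).
assert (Hz : a < z <= a + d / 2 /\ z <= (a + B) / 2).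
{ split; [split|]; [apply Rmin_Rgt; lra | apply Rmin_l | apply Rmin_r]. }
exists z; split; [lra|].
assert (Hdist : R_dist (f z) (f a) < f a - L).
{ apply Hnear; split; [split; [exact I | lra]|]. unfold R_dist; apply Rabs_def1; lra. }
apply Rabs_def2 in Hdist; lra.
Qed.

Lemma derive_eq0_of_is_extremum_on a b (f : R -> R) x l : a < x < b ->
  is_extremum_on a b f x -> is_derive f x l -> l = 0.
Proof.
intros Hx [_ [d [Hd Hext]]] Hder.
apply is_derive_Reals in Hder.
set (lo := Rmax a (x - d)); set (hi := Rmin b (x + d)).
assert (Hlo : lo < x) by (apply Rmax_Rlt; lra).
assert (Hhi : x < hi) by (apply Rmin_Rgt; lra).
assert (Hnear : forall y, lo < y -> y < hi -> a <= y <= b /\ Rabs (y - x) < d).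
{ intros y H1 H2; apply Rmax_Rlt in H1; apply Rmin_Rgt in H2.
  split; [lra | apply Rabs_def1; lra]. }
set (pr := exist (fun l => derivable_pt_lim f x l) l Hder : derivable_pt f x).
assert (E : derive_pt f x pr = l) by (apply derive_pt_eq_0, Hder).
rewrite <- E.
destruct Hext as [Hmax | Hmin].
- apply (deriv_maximum f lo hi x pr Hlo Hhi).
  intros y H1 H2; destruct (Hnear y H1 H2); apply Hmax; assumption.
- apply (deriv_minimum f lo hi x pr Hlo Hhi).
  intros y H1 H2; destruct (Hnear y H1 H2); apply Hmin; assumption.
Qed.

Lemma three_lt_PI : 3 < PI.
Proof. generalize PI2_3_2; lra. Qed.

Lemma sin_PI_mul_pos x : 0 < x < 1 -> 0 < sin (PI * x).
Proof.
intros Hx; generalize PI_RGT_0; intro.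
apply sin_gt_0; [apply Rmult_lt_0_compat | rewrite <- (Rmult_1_r PI) at 2]; nra.
Qed.

(* [tan y >= y] on [0, pi/2), without dividing by [cos y]. *)
Lemma x_cos_le_sin y : 0 <= y <= PI / 2 -> y * cos y <= sin y.
Proof.
intros Hy; destruct (Req_dec y 0) as [->|Hy0]; [rewrite sin_0; lra|].
destruct (MVT_cor2 (fun u => sin u - u * cos u) (fun u => u * sin u) 0 y)
  as [c [E Hc]]; [lra| |].
- intros c _; apply is_derive_Reals; auto_derive; [exact I | ring].
- assert (0 < sin c) by (generalize PI_RGT_0; intro; apply sin_gt_0; lra).
  assert (0 < c * sin c) by (apply Rmult_lt_0_compat; lra).
  rewrite sin_0, Rmult_0_l in E; nra.
Qed.

Definition cotpi x := PI * cot (PI * x).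

Lemma cotpi_half : cotpi (1/2) = 0.
Proof.
unfold cotpi, cot; replace (PI * (1/2)) with (PI / 2) by field.
rewrite cos_PI2, sin_PI2; field.
Qed.

(* With [y = pi (x - 1/2)]: [cot (pi x) = - tan y <= - y]. *)
Lemma cotpi_le x : 1/2 <= x < 1 -> cotpi x <= - PI ^ 2 * (x - 1/2).
Proof.
intros Hx; generalize PI_RGT_0; intro Hpi.
set (y := PI * x - PI / 2).
assert (Hy : 0 <= y < PI / 2) by (unfold y; split; nra).
assert (Hpx : PI * x = y + PI / 2) by (unfold y; ring).
assert (Hcos : 0 < cos y) by (apply cos_gt_0; lra).
unfold cotpi, cot; rewrite Hpx, sin_plus, cos_plus, sin_PI2, cos_PI2.
replace (- PI ^ 2 * (x - 1/2)) with (PI * - y) by (unfold y; field).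
apply Rmult_le_compat_l; [lra|].
apply (Rmult_le_reg_r (cos y)); [exact Hcos|].
generalize (x_cos_le_sin y ltac:(lra)); intro.
replace ((cos y * 0 - sin y * 1) / (sin y * 0 + cos y * 1) * cos y) with (- sin y)
  by (field; lra).
lra.
Qed.

Lemma is_derive_cotpi x : 0 < x < 1 -> is_derive cotpi x (- (PI ^ 2 + cotpi x ^ 2)).
Proof.
intros Hx; generalize (sin_PI_mul_pos x Hx); intro.
unfold cotpi, cot; auto_derive; [lra | field; lra].
Qed.

Lemma Derive_cotpi x : 0 < x < 1 -> Derive (fun y => cotpi y) x = - (PI ^ 2 + cotpi x ^ 2).
Proof. intros Hx; apply is_derive_unique, is_derive_cotpi, Hx. Qed.

Section Alpha_beta.

Variable k : R.
Hypothesis k_ge2 : 2 <= k.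

Definition alpha x := / (k - x) + cotpi x.
Definition beta x := / (k + x - 1) - cotpi x.
Definition alpha_beta x := alpha x * beta x.

Lemma is_derive_alpha x : 0 < x < 1 ->
  is_derive alpha x (/ ((k - x) * (k - x)) - (PI ^ 2 + cotpi x ^ 2)).
Proof.
intros Hx; unfold alpha; auto_derive.
- split; [lra | split; [eexists; apply is_derive_cotpi, Hx | exact I]].
- rewrite Derive_cotpi by exact Hx; field; lra.
Qed.

Lemma alpha_decr y z : 0 < y < z -> z < 1 -> alpha z < alpha y.
Proof.
intros Hy Hz; generalize three_lt_PI; intro Hpi.
apply (decr_of_derive_neg alpha
  (fun x => / ((k - x) * (k - x)) - (PI ^ 2 + cotpi x ^ 2))); [lra| |].
- intros c Hc; apply is_derive_alpha; lra.
- intros c Hc.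
  assert (/ ((k - c) * (k - c)) <= 1).
  { rewrite <- Rinv_1; apply Rinv_le_contravar; nra. }
  nra.
Qed.

Lemma alpha_half_pos : 0 < alpha (1/2).
Proof. unfold alpha; rewrite cotpi_half, Rplus_0_r; apply Rinv_0_lt_compat; lra. Qed.

Lemma alpha_3_4_neg : alpha (3/4) < 0.
Proof.
unfold alpha; generalize (cotpi_le (3/4) ltac:(lra)) three_lt_PI; intros Hc Hpi.
assert (/ (k - 3/4) <= 4/5).
{ replace (4/5) with (/ (5/4)) by field; apply Rinv_le_contravar; lra. }
nra.
Qed.

Lemma exists_alpha_root : {A | 1/2 < A < 3/4 /\ alpha A = 0}.
Proof.
destruct (Ranalysis5.IVT_interv (fun y => - alpha y) (1/2) (3/4)) as [A [HA HA0]].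
- intros a Ha; apply continuity_pt_opp, continuity_pt_of_ex_derive.
  eexists; apply is_derive_alpha; lra.
- lra.
- generalize alpha_half_pos; lra.
- generalize alpha_3_4_neg; lra.
- exists A; split; [|lra].
  assert (A <> 1/2) by (intros ->; generalize alpha_half_pos; lra).
  assert (A <> 3/4) by (intros ->; generalize alpha_3_4_neg; lra).
  lra.
Qed.

Lemma beta_pos y : 1/2 <= y < 1 -> 0 < beta y.
Proof.
intros Hy; unfold beta; generalize (cotpi_le y Hy) three_lt_PI; intros Hc Hpi.
assert (0 < / (k + y - 1)) by (apply Rinv_0_lt_compat; lra).
assert (0 <= PI ^ 2 * (y - 1/2)) by (apply Rmult_le_pos; nra).
lra.
Qed.

Lemma alpha_beta_half : alpha_beta (1/2) = / (k - 1/2) * / (k - 1/2).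
Proof.
unfold alpha_beta, alpha, beta; rewrite cotpi_half.
replace (k + 1/2 - 1) with (k - 1/2) by field; ring.
Qed.

Lemma is_derive_alpha_beta x : 0 < x < 1 ->
  is_derive alpha_beta x
    ((2 * (x - 1/2) + - cotpi x * (4 * (x - 1/2) ^ 2 + 2 * ((k - x) * (k + x - 1)))
      - (PI ^ 2 + cotpi x ^ 2) * ((k - x) * (k + x - 1))
        * (2 * - cotpi x * ((k - x) * (k + x - 1)) - 2 * (x - 1/2)))
     / (((k - x) * (k + x - 1)) * ((k - x) * (k + x - 1)))).
Proof.
intros Hx; unfold alpha_beta, alpha, beta; auto_derive.
- repeat split; try lra; eexists; apply is_derive_cotpi; lra.
- rewrite Derive_cotpi by lra; field; lra.
Qed.

(* The numerator of [is_derive_alpha_beta], with [t = x - 1/2], [T = - cotpi x],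
   [P = pi^2 + cotpi x ^ 2] and [q = (k - x) (k + x - 1)]. *)
Lemma alpha_beta_numerator_neg t T P q : 0 < t < 1/4 -> 9 * t <= T -> 9 <= P ->
  15/8 <= q -> 2 * t + T * (4 * t ^ 2 + 2 * q) - P * q * (2 * T * q - 2 * t) < 0.
Proof.
intros Ht HT HP Hq.
assert (H1 : 0 <= 2 * T * (q - 1/9)) by nra.
assert (H2 : 9 * q * (2 * T * (q - 1/9)) <= P * q * (2 * T * q - 2 * t)).
{ apply Rmult_le_compat; nra. }
assert (H3 : T * (4 * t ^ 2 + 2 * q) <= T * (1/4 + 2 * q)) by (apply Rmult_le_compat_l; nra).
assert (H4 : T * (2/9 + 1/4 + 4 * q - 18 * q * q) < 0) by nra.
nra.
Qed.

Lemma alpha_beta_decr y z : 1/2 <= y < z -> z <= 3/4 -> alpha_beta z < alpha_beta y.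
Proof.
intros Hy Hz; generalize three_lt_PI; intro Hpi.
eapply decr_of_derive_neg; [lra | intros c Hc; apply is_derive_alpha_beta; lra |].
intros c Hc; simpl.
set (q := (k - c) * (k + c - 1)).
assert (Hq : 15/8 <= q).
{ unfold q; replace (15/8) with (5/4 * (3/2)) by field; apply Rmult_le_compat; lra. }
assert (HT : 9 * (c - 1/2) <= - cotpi c).
{ generalize (cotpi_le c ltac:(lra)); intro.
  assert (9 * (c - 1/2) <= PI ^ 2 * (c - 1/2)) by (apply Rmult_le_compat_r; nra).
  lra. }
apply Rdiv_neg_pos; [|nra].
apply alpha_beta_numerator_neg; nra.
Qed.

Definition K p x := p * (ln (k + x - 1) - ln (k - x)) + ln (alpha x) - ln (beta x).

Lemma K_half p : K p (1/2) = 0.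
Proof.
unfold K, alpha, beta; rewrite cotpi_half.
replace (k + 1/2 - 1) with (k - 1/2) by field; rewrite Rplus_0_r, Rminus_0_r; ring.
Qed.

Lemma is_derive_K p x : 1/2 <= x < 1 -> 0 < alpha x ->
  is_derive (K p) x
    ((/ (k - x) + / (k + x - 1)) * ((p + 1) * alpha_beta x - PI ^ 2) / alpha_beta x).
Proof.
intros Hx Hal; generalize (beta_pos x Hx); intro Hbe.
assert (Ha : 0 < 1 + cotpi x * (k - x)).
{ replace (1 + cotpi x * (k - x)) with ((k - x) * alpha x) by (unfold alpha; field; lra).
  apply Rmult_lt_0_compat; lra. }
assert (Hb : 0 < 1 - cotpi x * (k + x - 1)).
{ replace (1 - cotpi x * (k + x - 1)) with ((k + x - 1) * beta x) by (unfold beta; field; lra).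
  apply Rmult_lt_0_compat; lra. }
unfold K, alpha_beta, alpha, beta in *; unfold Rminus in *; auto_derive.
- repeat split; try lra; eexists; apply is_derive_cotpi; lra.
- rewrite Derive_cotpi by lra; field; repeat split; lra.
Qed.

Definition psi_l p x := exp (p * (ln (sin (PI * x)) - ln (k - x))).
Definition psi_r p x := exp (p * (ln (sin (PI * x)) - ln (k + x - 1))).
Definition dpsi p x := psi_l p x * alpha x - psi_r p x * beta x.

Lemma ex_derive_dpsi p x : 0 < x < 1 -> ex_derive (dpsi p) x.
Proof.
intros Hx; generalize (sin_PI_mul_pos x Hx); intro Hs.
unfold dpsi, psi_l, psi_r, alpha, beta, cotpi, cot; auto_derive; repeat split; lra.
Qed.

Lemma is_derive_psi_l_plus_r p x : 0 < x < 1 ->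
  is_derive (fun y => psi_l p y + psi_r p y) x (p * dpsi p x).
Proof.
intros Hx; generalize (sin_PI_mul_pos x Hx); intro Hs.
unfold dpsi, psi_l, psi_r, alpha, beta, cotpi, cot; auto_derive.
- repeat split; lra.
- unfold Rminus; field; repeat split; lra.
Qed.

(* [K] is the logarithm of [(psi_l * alpha) / (psi_r * beta)]. *)
Lemma dpsi_factor p x : 0 < x < 1 -> 0 < alpha x -> 0 < beta x ->
  dpsi p x = psi_r p x * beta x * (exp (K p x) - 1).
Proof.
intros Hx Hal Hbe; unfold dpsi, psi_l, psi_r.
set (u := p * (ln (sin (PI * x)) - ln (k - x))).
set (v := p * (ln (sin (PI * x)) - ln (k + x - 1))).
replace (K p x) with (u + ln (alpha x) + - v + - ln (beta x)) by (unfold K, u, v; ring).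
rewrite !exp_plus, !exp_Ropp, !exp_ln by lra.
generalize (exp_pos v); intro; field; lra.
Qed.

Lemma psi_r_beta_pos p x : 1/2 <= x < 1 -> 0 < psi_r p x * beta x.
Proof. intros Hx; apply Rmult_lt_0_compat; [apply exp_pos | apply beta_pos, Hx]. Qed.

Lemma dpsi_pos p x : 1/2 <= x < 1 -> 0 < alpha x -> 0 < K p x -> 0 < dpsi p x.
Proof.
intros Hx Hal HK; rewrite dpsi_factor by (try apply beta_pos; lra).
apply Rmult_lt_0_compat; [apply psi_r_beta_pos, Hx|].
generalize (exp_increasing 0 (K p x) HK); rewrite exp_0; lra.
Qed.

Lemma dpsi_neg p x : 1/2 <= x < 1 -> 0 < alpha x -> K p x < 0 -> dpsi p x < 0.
Proof.
intros Hx Hal HK; rewrite dpsi_factor by (try apply beta_pos; lra).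
generalize (psi_r_beta_pos p x Hx) (exp_increasing (K p x) 0 HK); rewrite exp_0; intros.
nra.
Qed.

Lemma K_eq0_of_dpsi_eq0 p x : 1/2 <= x < 1 -> 0 < alpha x -> dpsi p x = 0 -> K p x = 0.
Proof.
intros Hx Hal H0; rewrite dpsi_factor in H0 by (try apply beta_pos; lra).
apply Rmult_integral in H0; destruct H0 as [H0 | H0].
- generalize (psi_r_beta_pos p x Hx); lra.
- apply exp_inv; rewrite exp_0; lra.
Qed.

Lemma dpsi_neg_of_alpha_nonpos p x : 1/2 <= x < 1 -> alpha x <= 0 -> dpsi p x < 0.
Proof.
intros Hx Hal; unfold dpsi.
generalize (psi_r_beta_pos p x Hx) (exp_pos (p * (ln (sin (PI * x)) - ln (k - x)))).
fold (psi_l p x); nra.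
Qed.

Section Root.

Variable A : R.
Hypothesis A_bounds : 1/2 < A < 3/4.
Hypothesis alpha_A : alpha A = 0.

Lemma alpha_pos_before_root y : 1/2 <= y < A -> 0 < alpha y.
Proof. intros Hy; rewrite <- alpha_A; apply alpha_decr; lra. Qed.

Lemma alpha_neg_after_root y : A < y < 1 -> alpha y < 0.
Proof. intros Hy; rewrite <- alpha_A; apply alpha_decr; lra. Qed.

Lemma alpha_beta_pos y : 1/2 <= y < A -> 0 < alpha_beta y.
Proof.
intros Hy; apply Rmult_lt_0_compat; [apply alpha_pos_before_root | apply beta_pos]; lra.
Qed.

Lemma K_incr p y z : 1/2 <= y < z -> z < A -> PI ^ 2 <= (p + 1) * alpha_beta z ->
  K p y < K p z.
Proof.
intros Hy Hz Hg; generalize three_lt_PI; intro Hpi.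
eapply incr_of_derive_pos; [lra | intros c Hc; apply is_derive_K, alpha_pos_before_root; lra |].
intros c Hc; simpl.
assert (alpha_beta z < alpha_beta c) by (apply alpha_beta_decr; lra).
assert (0 < alpha_beta z) by (apply alpha_beta_pos; lra).
assert (0 < / (k - c) + / (k + c - 1)).
{ apply Rplus_lt_0_compat; apply Rinv_0_lt_compat; lra. }
assert (0 < p + 1) by nra.
apply Rdiv_lt_0_compat; [apply Rmult_lt_0_compat; nra | lra].
Qed.

Lemma K_decr p y z : 1/2 <= y < z -> z < A -> (p + 1) * alpha_beta y <= PI ^ 2 ->
  K p z < K p y.
Proof.
intros Hy Hz Hg; generalize three_lt_PI; intro Hpi.
eapply decr_of_derive_neg; [lra | intros c Hc; apply is_derive_K, alpha_pos_before_root; lra |].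
intros c Hc; simpl.
assert (alpha_beta c < alpha_beta y) by (apply alpha_beta_decr; lra).
assert (0 < alpha_beta c) by (apply alpha_beta_pos; lra).
assert (0 < / (k - c) + / (k + c - 1)).
{ apply Rplus_lt_0_compat; apply Rinv_0_lt_compat; lra. }
apply Rdiv_neg_pos; [|lra].
assert ((p + 1) * alpha_beta c < PI ^ 2).
{ destruct (Rlt_le_dec 0 (p + 1)); nra. }
nra.
Qed.

Lemma K_sign_around_root p x0 : 1/2 < x0 < A -> K p x0 = 0 ->
  (forall y, 1/2 < y < x0 -> 0 < K p y) /\ (forall y, x0 < y < A -> K p y < 0).
Proof.
intros Hx0 HK.
assert (Hg : (p + 1) * alpha_beta x0 < PI ^ 2).
{ apply Rnot_le_lt; intro Hg.
  generalize (K_incr p (1/2) x0 ltac:(lra) ltac:(lra) Hg); rewrite K_half; lra. }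
split.
- intros y Hy; destruct (Rle_lt_dec (PI ^ 2) ((p + 1) * alpha_beta y)) as [Hgy | Hgy].
  + generalize (K_incr p (1/2) y ltac:(lra) ltac:(lra) Hgy); rewrite K_half; lra.
  + generalize (K_decr p y x0 ltac:(lra) ltac:(lra) ltac:(lra)); lra.
- intros y Hy; generalize (K_decr p x0 y ltac:(lra) ltac:(lra) ltac:(lra)); lra.
Qed.

Lemma K_neg_of_alpha_beta_half_le p y : (p + 1) * alpha_beta (1/2) <= PI ^ 2 ->
  1/2 < y < A -> K p y < 0.
Proof.
intros Hg Hy; generalize (K_decr p (1/2) y ltac:(lra) ltac:(lra) Hg); rewrite K_half; lra.
Qed.

Lemma K_pos_near_half p : PI ^ 2 < (p + 1) * alpha_beta (1/2) ->
  exists z, 1/2 < z < A /\ forall y, 1/2 < y <= z -> 0 < K p y.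
Proof.
intros Hg.
assert (Hcont : continuity_pt (fun x => (p + 1) * alpha_beta x) (1/2)).
{ apply continuity_pt_of_ex_derive; apply ex_derive_scal.
  eexists; apply is_derive_alpha_beta; lra. }
destruct (continuity_pt_gt_right _ (1/2) (PI ^ 2) A Hcont Hg ltac:(lra)) as [z [Hz Hgz]].
exists z; split; [exact Hz|]; intros y Hy.
assert (Hgy : PI ^ 2 <= (p + 1) * alpha_beta y).
{ destruct (Req_dec y z) as [-> | Hyz]; [lra|].
  assert (alpha_beta z < alpha_beta y) by (apply alpha_beta_decr; lra).
  assert (0 < alpha_beta z) by (apply alpha_beta_pos; lra).
  assert (0 < p + 1) by nra.
  nra. }
generalize (K_incr p (1/2) y ltac:(lra) ltac:(lra) Hgy); rewrite K_half; lra.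
Qed.

Lemma dpsi_neg_right p x0 : 1/2 <= x0 -> (forall y, x0 < y < A -> K p y < 0) ->
  forall y, x0 < y < 1 -> dpsi p y < 0.
Proof.
intros Hx0 HK y Hy; destruct (Rlt_le_dec y A) as [HyA | HyA].
- apply dpsi_neg; [lra | apply alpha_pos_before_root; lra | apply HK; lra].
- apply dpsi_neg_of_alpha_nonpos; [lra|].
  destruct (Req_dec y A) as [-> | HyA']; [lra|].
  apply Rlt_le, alpha_neg_after_root; lra.
Qed.

Lemma alpha_root_unique B : 1/2 < B < 1 -> alpha B = 0 -> B = A.
Proof.
intros HB HB0; destruct (Rtotal_order B A) as [H | [H | H]]; [|exact H|].
- generalize (alpha_pos_before_root B ltac:(lra)); lra.
- generalize (alpha_neg_after_root B ltac:(lra)); lra.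
Qed.

End Root.

End Alpha_beta.

Section Psi.

Variable k : nat.
Hypothesis k_ge2 : 2 <= INR k.

Lemma psi_eq_psi_l_plus_r p y : 0 < y < 1 ->
  psi k p y = psi_l (INR k) p y + psi_r (INR k) p y.
Proof.
intros Hy; generalize (sin_PI_mul_pos y Hy); intro Hs.
unfold psi, psi_l, psi_r, rpow.
destruct (Rle_dec (sin (PI * y)) 0); [lra|].
destruct (Rle_dec (INR k - y) 0); [lra|].
destruct (Rle_dec (INR k + y - 1) 0); [lra|].
unfold Rpower; rewrite !Rmult_minus_distr_l; unfold Rminus; rewrite !exp_plus, !exp_Ropp; ring.
Qed.

Lemma is_derive_psi p x : 0 < x < 1 -> is_derive (psi k p) x (p * dpsi (INR k) p x).
Proof.
intros Hx.
apply (is_derive_ext_loc (fun y => psi_l (INR k) p y + psi_r (INR k) p y)).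
- apply (locally_interval _ x 0 1); [simpl; lra | simpl; lra |].
  intros y H0 H1; symmetry; apply psi_eq_psi_l_plus_r; simpl in *; lra.
- apply (is_derive_psi_l_plus_r _ k_ge2), Hx.
Qed.

Lemma psi_1 p : psi k p 1 = 0.
Proof.
unfold psi, rpow; rewrite Rmult_1_r, sin_PI.
destruct (Rle_dec 0 0); [ring | lra].
Qed.

Lemma psi_nonneg p y : 1/2 <= y <= 1 -> 0 <= psi k p y.
Proof.
intros Hy.
assert (rpow_pos : forall u, 0 < u -> 0 < rpow u p).
{ intros u Hu; unfold rpow; destruct (Rle_dec u 0); [lra | apply exp_pos]. }
unfold psi; apply Rmult_le_pos.
- unfold rpow; destruct (Rle_dec (sin (PI * y)) 0); [lra | apply Rlt_le, exp_pos].
- apply Rlt_le, Rplus_lt_0_compat; apply Rinv_0_lt_compat, rpow_pos; lra.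
Qed.

Lemma psi_incr p a b : 0 < p -> 0 < a < b -> b < 1 ->
  (forall c, a < c < b -> 0 < dpsi (INR k) p c) -> psi k p a < psi k p b.
Proof.
intros Hp Ha Hb Hd.
apply (incr_of_derive_pos _ (fun c => p * dpsi (INR k) p c)); [lra | |].
- intros c Hc; apply is_derive_psi; lra.
- intros c Hc; apply Rmult_lt_0_compat; [lra | apply Hd, Hc].
Qed.

Lemma psi_decr p a b : 0 < p -> 0 < a < b -> b < 1 ->
  (forall c, a < c < b -> dpsi (INR k) p c < 0) -> psi k p b < psi k p a.
Proof.
intros Hp Ha Hb Hd.
apply (decr_of_derive_neg _ (fun c => p * dpsi (INR k) p c)); [lra | |].
- intros c Hc; apply is_derive_psi; lra.
- intros c Hc; generalize (Hd c Hc); nra.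
Qed.

Lemma is_extremum_on_1 p : is_extremum_on (1/2) 1 (psi k p) 1.
Proof.
split; [lra|]; exists 1; split; [lra|]; right; intros y Hy _.
rewrite psi_1; apply psi_nonneg, Hy.
Qed.

Lemma is_extremum_on_of_dpsi_sign p x0 : 0 < p -> 1/2 <= x0 < 1 ->
  (forall c, 1/2 < c < x0 -> 0 < dpsi (INR k) p c) ->
  (forall c, x0 < c < 1 -> dpsi (INR k) p c < 0) ->
  is_extremum_on (1/2) 1 (psi k p) x0.
Proof.
intros Hp Hx0 Hleft Hright.
split; [lra|]; exists 1; split; [lra|]; left; intros y Hy _.
destruct (Rtotal_order y x0) as [Hyx | [-> | Hyx]]; [| lra |].
- apply Rlt_le, psi_incr; [lra | lra | lra |].
  intros c Hc; apply Hleft; lra.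
- destruct (Req_dec y 1) as [-> | Hy1].
  + rewrite psi_1; apply psi_nonneg; lra.
  + apply Rlt_le, psi_decr; [lra | lra | lra |].
    intros c Hc; apply Hright; lra.
Qed.

Lemma is_extremum_on_half_of_dpsi_pos p z : 0 < p -> 1/2 < z < 1 ->
  (forall c, 1/2 < c < z -> 0 < dpsi (INR k) p c) ->
  is_extremum_on (1/2) 1 (psi k p) (1/2).
Proof.
intros Hp Hz Hd.
split; [lra|]; exists (z - 1/2); split; [lra|]; right; intros y Hy Hyd.
apply Rabs_def2 in Hyd.
destruct (Req_dec y (1/2)) as [-> | Hy12]; [lra|].
apply Rlt_le, psi_incr; [lra | lra | lra |].
intros c Hc; apply Hd; lra.
Qed.

Lemma dpsi_eq0_of_is_extremum_on p x : 0 < p -> 1/2 < x < 1 ->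
  is_extremum_on (1/2) 1 (psi k p) x -> dpsi (INR k) p x = 0.
Proof.
intros Hp Hx Hext.
generalize (derive_eq0_of_is_extremum_on _ _ _ _ _ Hx Hext (is_derive_psi p x ltac:(lra))).
intros H0; apply Rmult_integral in H0; destruct H0; lra.
Qed.

Lemma A_eq_iff_alpha_eq0 x : x < 1 -> A_eq k x <-> alpha (INR k) x = 0.
Proof.
intros Hx; generalize PI_RGT_0; intro Hpi; unfold A_eq, alpha, cotpi.
split; intros H.
- rewrite H; field; lra.
- apply (Rmult_eq_reg_l PI); [|lra].
  replace (PI * - / (PI * (INR k - x))) with (- / (INR k - x)) by (field; lra).
  lra.
Qed.

Lemma ln_ratio_pos x : 1/2 < x < 1 -> 0 < ln (INR k + x - 1) - ln (INR k - x).
Proof. intros Hx; generalize (ln_increasing (INR k - x) (INR k + x - 1)); lra. Qed.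

Section Root_psi.

Variable A : R.
Hypothesis A_bounds : 1/2 < A < 3/4.
Hypothesis alpha_A : alpha (INR k) A = 0.

Lemma is_extremum_on_half p : 0 < p -> is_extremum_on (1/2) 1 (psi k p) (1/2).
Proof.
intros Hp.
destruct (Rle_lt_dec ((p + 1) * alpha_beta (INR k) (1/2)) (PI ^ 2)) as [Hg | Hg].
- apply is_extremum_on_of_dpsi_sign; [lra | lra | intros c Hc; lra |].
  apply (dpsi_neg_right _ k_ge2 A A_bounds alpha_A); [lra|].
  intros y Hy; apply (K_neg_of_alpha_beta_half_le _ k_ge2 A A_bounds alpha_A); assumption.
- destruct (K_pos_near_half _ k_ge2 A A_bounds alpha_A p Hg) as [z [Hz HK]].
  apply (is_extremum_on_half_of_dpsi_pos p z); [lra | lra |].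
  intros c Hc; apply (dpsi_pos _ k_ge2); [lra | | apply HK; lra].
  apply (alpha_pos_before_root _ k_ge2 A A_bounds alpha_A); lra.
Qed.

Lemma is_extremum_on_of_K_eq0 p x : 0 < p -> 1/2 < x < A -> K (INR k) p x = 0 ->
  is_extremum_on (1/2) 1 (psi k p) x.
Proof.
intros Hp Hx HK.
destruct (K_sign_around_root _ k_ge2 A A_bounds alpha_A p x Hx HK) as [Hleft Hright].
apply is_extremum_on_of_dpsi_sign; [lra | lra | |].
- intros c Hc; apply (dpsi_pos _ k_ge2); [lra | | apply Hleft, Hc].
  apply (alpha_pos_before_root _ k_ge2 A A_bounds alpha_A); lra.
- apply (dpsi_neg_right _ k_ge2 A A_bounds alpha_A); [lra | exact Hright].
Qed.

Lemma K_eq0_of_is_extremum_on p x : 0 < p -> 1/2 < x < A ->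
  is_extremum_on (1/2) 1 (psi k p) x -> K (INR k) p x = 0.
Proof.
intros Hp Hx Hext; apply (K_eq0_of_dpsi_eq0 _ k_ge2); [lra | |].
- apply (alpha_pos_before_root _ k_ge2 A A_bounds alpha_A); lra.
- apply dpsi_eq0_of_is_extremum_on; [lra | lra | exact Hext].
Qed.

Lemma exists_extremum_before_root p : 0 < p -> PI ^ 2 < (p + 1) * alpha_beta (INR k) (1/2) ->
  exists x, 1/2 < x < A /\ is_extremum_on (1/2) 1 (psi k p) x.
Proof.
intros Hp Hg.
destruct (K_pos_near_half _ k_ge2 A A_bounds alpha_A p Hg) as [z [Hz HK]].
assert (Hdz : 0 < dpsi (INR k) p z).
{ apply (dpsi_pos _ k_ge2); [lra | | apply HK; lra].
  apply (alpha_pos_before_root _ k_ge2 A A_bounds alpha_A); lra. }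
assert (HdA : dpsi (INR k) p A < 0) by (apply (dpsi_neg_of_alpha_nonpos _ k_ge2); lra).
destruct (Ranalysis5.IVT_interv (fun y => - dpsi (INR k) p y) z A) as [x [Hx Hx0]].
- intros a Ha; apply continuity_pt_opp, continuity_pt_of_ex_derive, ex_derive_dpsi; lra.
- lra.
- lra.
- lra.
- assert (x <> z) by (intros ->; lra).
  assert (x <> A) by (intros ->; lra).
  exists x; split; [lra|].
  apply is_extremum_on_of_K_eq0; [lra | lra |].
  apply (K_eq0_of_dpsi_eq0 _ k_ge2); [lra | | lra].
  apply (alpha_pos_before_root _ k_ge2 A A_bounds alpha_A); lra.
Qed.

Lemma K_eq_ptilde p x : 1/2 < x < A ->
  K (INR k) p x = (p - ptilde k x) * (ln (INR k + x - 1) - ln (INR k - x)).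
Proof.
intros Hx; generalize (ln_ratio_pos x ltac:(lra)); intro HD.
assert (Hal : 0 < alpha (INR k) x)
  by (apply (alpha_pos_before_root _ k_ge2 A A_bounds alpha_A); lra).
assert (Hbe : 0 < beta (INR k) x) by (apply (beta_pos _ k_ge2); lra).
unfold ptilde; fold (cotpi x).
replace (1 - cotpi x * (INR k + x - 1)) with ((INR k + x - 1) * beta (INR k) x)
  by (unfold beta; field; lra).
replace (cotpi x * (INR k + x - 1) - 1 + (2 * INR k - 1) / (INR k - x))
  with ((INR k + x - 1) * alpha (INR k) x) by (unfold alpha; field; lra).
replace ((INR k + x - 1) * beta (INR k) x / ((INR k + x - 1) * alpha (INR k) x))
  with (beta (INR k) x * / alpha (INR k) x) by (field; lra).
rewrite ln_mult, ln_Rinv by (try apply Rinv_0_lt_compat; lra).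
unfold K; field; lra.
Qed.

Lemma ptilde_gt1 x : 1/2 < x < A -> 1 < ptilde k x.
Proof.
intros Hx; generalize (ln_ratio_pos x ltac:(lra)) three_lt_PI; intros HD Hpi.
assert (Hg : (1 + 1) * alpha_beta (INR k) (1/2) <= PI ^ 2).
{ rewrite alpha_beta_half.
  assert (/ (INR k - 1/2) <= 2/3).
  { replace (2/3) with (/ (3/2)) by field; apply Rinv_le_contravar; lra. }
  assert (0 < / (INR k - 1/2)) by (apply Rinv_0_lt_compat; lra).
  nra. }
generalize (K_neg_of_alpha_beta_half_le _ k_ge2 A A_bounds alpha_A 1 x Hg Hx).
rewrite K_eq_ptilde by exact Hx; nra.
Qed.

Lemma is_extremum_on_iff_ptilde p x : 0 < p -> 1/2 < x < A ->
  is_extremum_on (1/2) 1 (psi k p) x <-> p = ptilde k x.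
Proof.
intros Hp Hx; generalize (ln_ratio_pos x ltac:(lra)); intro HD.
split; intros H.
- apply K_eq0_of_is_extremum_on in H; [|lra|lra].
  rewrite K_eq_ptilde in H by exact Hx.
  apply Rmult_integral in H; destruct H; lra.
- apply is_extremum_on_of_K_eq0; [lra | lra |].
  rewrite K_eq_ptilde, H by exact Hx; ring.
Qed.

End Root_psi.

End Psi.

Theorem lemma4 (k : nat) (hk : (2 <= k)%nat) :
  (forall p : R, 1 < p ->
     is_extremum_on (1/2) 1 (psi k p) (1/2) /\
     is_extremum_on (1/2) 1 (psi k p) 1) /\
  exists A : R,
    1/2 < A < 1 /\ A_eq k A /\
    (forall B : R, 1/2 < B < 1 -> A_eq k B -> B = A) /\
    (forall p : R, 1 < p -> PI ^ 2 * (INR k - 1/2) ^ 2 - 1 < p ->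
       exists x : R, 1/2 < x < A /\ is_extremum_on (1/2) 1 (psi k p) x) /\
    (forall x : R, 1/2 < x < A ->
       1 < ptilde k x /\
       (forall p : R, 1 < p ->
          (is_extremum_on (1/2) 1 (psi k p) x <-> p = ptilde k x))).
Proof.
assert (Hk : 2 <= INR k) by (apply le_INR in hk; simpl in hk; lra).
destruct (exists_alpha_root (INR k) Hk) as [A [HA HA0]].
split.
{ intros p Hp; split.
  - apply (is_extremum_on_half k Hk A HA HA0); lra.
  - apply (is_extremum_on_1 k Hk). }
exists A; split; [lra|].
split; [apply (A_eq_iff_alpha_eq0 k Hk A); [lra | exact HA0]|].
split.
{ intros B HB HBe; apply (alpha_root_unique _ Hk A HA HA0 B HB).
  apply (A_eq_iff_alpha_eq0 k Hk B); [lra | exact HBe]. }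
split.
{ intros p Hp Hth; apply (exists_extremum_before_root k Hk A HA HA0 p); [lra|].
  rewrite alpha_beta_half.
  apply (Rmult_lt_reg_r ((INR k - 1/2) ^ 2)); [apply pow_lt; lra|].
  replace ((p + 1) * (/ (INR k - 1/2) * / (INR k - 1/2)) * (INR k - 1/2) ^ 2)
    with (p + 1) by (field; lra).
  lra. }
intros x Hx; split; [apply (ptilde_gt1 k Hk A HA HA0 x Hx)|].
intros p Hp; apply (is_extremum_on_iff_ptilde k Hk A HA HA0); lra.
Qed.
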